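(* Let $\Omega\subset\mathbb{R}^N$ be a bounded Lipschitz domain with outward unit normal $n$, let $A:\bar\Omega\to\mathcal{M}_{N\times N}(\mathbb{R})$ be a smooth uniformly elliptic matrix field, let $r\in C^{0,1}(\bar\Omega)$ with $r>0$, let $k\in C^{0,1}(\bar\Omega)$ with $k>0$, and let $p\ge1$. Let $\lambda_1$ be the first eigenvalue of $\nabla\cdot(A\nabla\,\cdot)+r$ with Neumann boundary condition and $\phi_1>0$ an associated eigenfunction ($\nabla\cdot(A\nabla\phi_1)+r\phi_1=-\lambda_1\phi_1$ in $\Omega$, $\partial_n\phi_1=0$ on $\partial\Omega$). If $\lambda_1<0$, then there exists $\mu>0$ such that $\mu\phi_1$ is a positive stationary solution of $$\frac{\partial u}{\partial t}=u\Big(r(x)-\int_\Omega k(y)|u(t,y)|^p\,dy\Big)+\nabla\cdot(A(x)\nabla u)\ \text{ in }(0,\infty)\times\Omega,\qquad\frac{\partial u}{\partial n}=0\ \text{ on }(0,\infty)\times\partial\Omega.$$ *)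

(* Classical (pointwise) formulation on R^N = 'rV[R]_N. *)
From HB Require Import structures.
From mathcomp Require Import all_boot all_order all_algebra.
From mathcomp Require Import all_classical all_reals all_analysis.
Set Implicit Arguments. Unset Strict Implicit. Unset Printing Implicit Defensive.
Import Order.TTheory GRing.Theory Num.Theory.
Import numFieldNormedType.Exports.
Local Open Scope classical_set_scope.
Local Open Scope ring_scope.

Section Defs.
Variables (R : realType) (N : nat).
Notation V := 'rV[R]_N.

Definition dotv (u v : V) : R := \sum_(i < N) u 0 i * v 0 i.
Definition enorm (v : V) : R := Num.sqrt (dotv v v).

(* Lipschitz continuity on a set S (any norm on R^N gives the same notion) *)
Definition lip_on (S : set V) (f : V -> R) : Prop :=
  exists L : R, forall x y, S x -> S y -> `|f x - f y| <= L * `|x - y|.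

(* topological boundary of an open set *)
Definition bdry (Om : set V) : set V := closure Om `\` Om.

(* Lipschitz boundary:
   near every boundary point, Om is (after choosing a unit direction e)
   the strict supergraph {y . y.e > gamma y} of a Lipschitz function gamma
   that does not depend on the e-component. *)
Definition lipschitz_boundary (Om : set V) : Prop :=
  forall x0, bdry Om x0 ->
  exists U : set V, [/\ open U, U x0 &
  exists e : V, enorm e = 1 /\
  exists gamma : V -> R, [/\ lip_on setT gamma,
     (forall y (t : R), gamma (y + t *: e) = gamma y) &
     Om `&` U = [set y | U y /\ gamma y < dotv y e]]].

Definition lipschitz_domain (Om : set V) : Prop :=
  [/\ open Om, connected Om, Om !=set0, bounded_set Om & lipschitz_boundary Om].

(* nu is an outward unit normal to Om at the boundary point x:
   Om has the tangent half-space {(y-x).nu < 0} at x. *)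
Definition outward_unit_normal (Om : set V) (x nu : V) : Prop :=
  bdry Om x /\ enorm nu = 1 /\
  forall eps : R, 0 < eps -> exists2 delta : R, 0 < delta &
    forall y, 0 < enorm (y - x) < delta ->
      (dotv (y - x) nu < - eps * enorm (y - x) -> Om y) /\
      (eps * enorm (y - x) < dotv (y - x) nu -> ~ Om y).

Definition partial (j : 'I_N) (u : V -> R) : V -> R :=
  fun x => 'D_(delta_mx 0 j) u x.

Definition iter_dir_deriv (vs : seq V) (f : V -> R) : V -> R :=
  foldr (fun v g => 'D_v g) f vs.

Definition smooth_on_closure (Om : set V) (A : V -> 'M[R]_N) : Prop :=
  exists2 W : set V, open W /\ closure Om `<=` W &
    forall (i j : 'I_N) (vs : seq V) x, W x ->
      differentiable (iter_dir_deriv vs (fun y => A y i j)) x.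

Definition uniformly_elliptic (Om : set V) (A : V -> 'M[R]_N) : Prop :=
  exists2 theta : R, 0 < theta &
    forall x (xi : V), closure Om x ->
      theta * dotv xi xi <= \sum_(i < N) \sum_(j < N) A x i j * xi 0 i * xi 0 j.

Definition flux (A : V -> 'M[R]_N) (u : V -> R) (i : 'I_N) : V -> R :=
  fun y => \sum_(j < N) A y i j * partial j u y.
Definition divA (A : V -> 'M[R]_N) (u : V -> R) : V -> R :=
  fun x => \sum_(i < N) partial i (flux A u i) x.

Definition classical_reg (Om : set V) (A : V -> 'M[R]_N) (u : V -> R) : Prop :=
  {within closure Om, continuous u} /\
  forall x, Om x -> differentiable u x /\ forall i, differentiable (flux A u i) x.

(* homogeneous Neumann condition: at every boundary point where an outward
   unit normal nu exists, the (one-sided) normal derivative vanishes *)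
Definition neumann (Om : set V) (u : V -> R) : Prop :=
  forall x nu, outward_unit_normal Om x nu ->
    (fun h : R => (u x - u (x - h *: nu)) / h) @ 0^'+ --> 0.

(* Lebesgue integral over R^N, written as an iterated integral
   (for the non-negative integrands used here this is the N-dimensional
   Lebesgue integral, by Tonelli). *)
Fixpoint iter_int (n : nat) : ('rV[R]_n -> \bar R) -> \bar R :=
  match n with
  | 0 => fun g => g 0
  | n'.+1 => fun g => (\int[@lebesgue_measure R]_(t in setT)
              iter_int (fun y : 'rV[R]_n' => g (row_mx (\row_(_ < 1) t) y)))%E
  end.

Definition dom_int (Om : set V) (g : V -> R) : R :=
  fine (iter_int (fun y : V => (\1_Om y * g y)%:E)).

Definition neumann_eigenpair (Om : set V) (A : V -> 'M[R]_N) (r : V -> R)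
    (lam : R) (phi : V -> R) : Prop :=
  [/\ classical_reg Om A phi, exists2 x, Om x & phi x != 0,
      (forall x, Om x -> divA A phi x + r x * phi x = - lam * phi x)
    & neumann Om phi].

Definition first_neumann_eigenvalue (Om : set V) (A : V -> 'M[R]_N) (r : V -> R)
    (lam : R) : Prop :=
  (exists phi, neumann_eigenpair Om A r lam phi) /\
  forall l phi, neumann_eigenpair Om A r l phi -> lam <= l.

Definition nonlocal_solution (Om : set V) (A : V -> 'M[R]_N) (r k : V -> R)
    (p : R) (u : R -> V -> R) : Prop :=
  forall t : R, 0 < t ->
    [/\ classical_reg Om A (u t),
        (forall x, Om x ->
           derivable (fun s => u s x) t 1 /\
           'D_1 (fun s => u s x) t =
             u t x * (r x - dom_int Om (fun y => k y * (`|u t y| `^ p)))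
             + divA A (u t) x)
      & neumann Om (u t)].

Definition positive_stationary_solution (Om : set V) (A : V -> 'M[R]_N)
    (r k : V -> R) (p : R) (U : V -> R) : Prop :=
  nonlocal_solution Om A r k p (fun _ => U) /\ forall x, Om x -> 0 < U x.

End Defs.

(* For mu > 0, div(A grad (mu phi1)) + r mu phi1 = - lam1 mu phi1 while the
   nonlocal term of mu phi1 is mu^p J, with J = \int_Om k phi1^p.  Hence mu phi1
   is stationary exactly when mu^p J = - lam1, which has a positive solution mu
   because lam1 < 0, provided 0 < J < +oo.  J is finite because k phi1^p is
   bounded and vanishes outside the bounded set Om, and positive because it is
   bounded below by a positive constant on a small ball inside Om. *)

From HB Require Import structures.
From mathcomp Require Import all_boot all_order all_algebra.
From mathcomp Require Import all_classical all_reals all_analysis.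
From mathcomp Require Import ring lra.
Set Implicit Arguments.
Unset Strict Implicit.
Unset Printing Implicit Defensive.
Import Order.TTheory GRing.Theory Num.Theory.
Import numFieldNormedType.Exports.
Local Open Scope classical_set_scope.
Local Open Scope ring_scope.

(* Variants of [ge0_integralZl] and [ge0_le_integral] without measurability:
   the partial integrals inside [iter_int] are not known to be measurable. *)
Section integral_nonmeasurable.
Local Open Scope ereal_scope.
Context d (T : measurableType d) (R : realType).
Variable mu : {measure set T -> \bar R}.
Import HBNNSimple.

Lemma ge0_integralTZl (c : R) (F : T -> \bar R) : (0 < c)%R -> (forall x, 0 <= F x) ->
  \int[mu]_(x in setT) (c%:E * F x) = c%:E * \int[mu]_(x in setT) F x.
Proof.
move=> c0 F0.
have cF0 x : 0 <= c%:E * F x by rewrite mule_ge0 // lee_fin ltW.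
rewrite !ge0_integralTE // -ereal_supZl; last 2 first.
- by apply/set0P; exists 0; exists nnsfun0 => //; exact: sintegral0.
- exact: ltW.
congr ereal_sup; apply/seteqP; split => z /=.
- move=> [h hh <-].
  have ci0 : (0 <= c^-1)%R by rewrite invr_ge0 ltW.
  exists (sintegral mu (scale_nnsfun h ci0)).
    exists (scale_nnsfun h ci0) => // x /=.
    rewrite EFinM -(@lee_pmul2l _ c%:E) ?lte_fin // muleA -EFinM mulfV ?gt_eqF //.
    by rewrite mul1r; exact: hh.
  rewrite -sintegralrM; apply: eq_sintegral => x /=.
  by rewrite mulrA mulfV ?gt_eqF // mul1r.
- move=> [w [h hh <-] <-]; exists (scale_nnsfun h (ltW c0)).
    by move=> x /=; rewrite EFinM lee_pmul2l ?lte_fin //; exact: hh.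
  by rewrite -sintegralrM.
Qed.

Lemma ge0_le_integralT (F G : T -> \bar R) : (forall x, 0 <= F x) ->
  (forall x, F x <= G x) ->
  \int[mu]_(x in setT) F x <= \int[mu]_(x in setT) G x.
Proof.
move=> F0 FG; have G0 x : 0 <= G x by exact: le_trans (FG x).
rewrite !ge0_integralTE //.
by apply: ereal_sup_le => z /= [h hh <-]; exists h => // x; exact: le_trans (FG x).
Qed.

End integral_nonmeasurable.

Section iterated_integral.
Variable R : realType.
Local Notation leb := (@lebesgue_measure R).

Lemma integral_indic_itv (v a b : R) (bb : bool * bool) : 0 <= v -> a <= b ->
  (\int[leb]_(t in setT)
     (v * \1_([set` Interval (BSide bb.1 a) (BSide bb.2 b)]) t)%:E
   = (v * (b - a))%:E)%E.
Proof.
move=> v0 ab.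
rewrite (@integralZl_indic _ _ _ leb _ measurableT
  (fun=> [set` Interval (BSide bb.1 a) (BSide bb.2 b)]) v) //; last first.
  by move=> /lt_le_trans /(_ v0); rewrite ltxx.
rewrite integral_indic //= ?setIT ?lebesgue_measure_itv /= lte_fin.
have [ab'|ab'] := ltP a b; first by rewrite -EFinD -EFinM.
have -> : b = a by apply/le_anti; rewrite ab ab'.
by rewrite subrr mulr0 mule0.
Qed.

Lemma iter_int_ge0 n (g : 'rV[R]_n -> \bar R) :
  (forall y, 0 <= g y)%E -> (0 <= iter_int g)%E.
Proof.
elim: n g => [|n IH] g g0 /=; first exact: g0.
by apply: integral_ge0 => t _; apply: IH => y; exact: g0.
Qed.

Lemma iter_intZ n (c : R) (g : 'rV[R]_n -> \bar R) :
  0 < c -> (forall y, 0 <= g y)%E ->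
  iter_int (fun y => c%:E * g y)%E = (c%:E * iter_int g)%E.
Proof.
move=> c0; elim: n g => [|n IH] g g0 //=.
under eq_integral do rewrite IH //.
by apply: ge0_integralTZl => // t; apply: iter_int_ge0.
Qed.

Lemma row_mx_row1_ord0 n (t : R) (y : 'rV[R]_n) :
  (row_mx (\row_(_ < 1) t) y : 'rV_n.+1) 0 ord0 = t.
Proof.
have -> : (ord0 : 'I_n.+1) = lshift n (ord0 : 'I_1) by apply: val_inj.
by etransitivity; [exact: row_mxEl | rewrite mxE].
Qed.

Lemma row_mx_row1_lift n (t : R) (y : 'rV[R]_n) j :
  (row_mx (\row_(_ < 1) t) y : 'rV_n.+1) 0 (lift ord0 j) = y 0 j.
Proof.
have -> : lift ord0 j = rshift 1 j by apply: val_inj.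
exact: row_mxEr.
Qed.

Lemma iter_int_box_lb n (g : 'rV[R]_n -> \bar R) (a b : 'I_n -> R) (c : R) :
  (forall i, a i < b i) -> 0 <= c -> (forall y, 0 <= g y)%E ->
  (forall y : 'rV[R]_n, (forall i, a i < y 0 i < b i) -> (c%:E <= g y)%E) ->
  ((c * \prod_i (b i - a i))%:E <= iter_int g)%E.
Proof.
elim: n g a b c => [|n IH] g a b c ab c0 g0 g_in.
  by rewrite big_ord0 mulr1 /=; apply: g_in => -[].
rewrite big_ord_recl /=.
set P := \prod_(i < n) _.
have P0 : 0 <= P by apply: prodr_ge0 => i _; rewrite subr_ge0 ltW.
set I := [set` Interval (BSide false (a ord0)) (BSide true (b ord0))].
have slice t : ((c * P * \1_I t)%:E
    <= iter_int (fun y => g (row_mx (\row_(_ < 1) t) y)))%E.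
  have [tI|tI] := boolP (a ord0 < t < b ord0); last first.
    rewrite indicE memNset ?mulr0; last by rewrite /I /= in_itv /= (negbTE tI).
    by apply: iter_int_ge0 => y; exact: g0.
  rewrite indicE mem_set ?mulr1; last by rewrite /I /= in_itv /= tI.
  apply: (IH _ (fun i => a (lift ord0 i)) (fun i => b (lift ord0 i))) => // y y_in.
  apply: g_in => i; case: (unliftP ord0 i) => [j ->|->].
    by rewrite row_mx_row1_lift.
  by rewrite row_mx_row1_ord0.
apply: le_trans (@ge0_le_integralT _ _ _ leb _ _ _ slice); last first.
  by move=> t; rewrite lee_fin !mulr_ge0.
rewrite (@integral_indic_itv _ _ _ (false, true)) ?mulr_ge0 //; last exact: ltW.
by rewrite lee_fin [_ * P]mulrC mulrA.
Qed.

Lemma iter_int_box_ub n (g : 'rV[R]_n -> \bar R) (a b : 'I_n -> R) (C : R) :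
  (forall i, a i <= b i) -> 0 <= C -> (forall y, 0 <= g y)%E ->
  (forall y : 'rV[R]_n, (forall i, a i <= y 0 i <= b i) -> (g y <= C%:E)%E) ->
  (forall y : 'rV[R]_n, ~ (forall i, a i <= y 0 i <= b i) -> (g y <= 0)%E) ->
  (iter_int g <= (C * \prod_i (b i - a i))%:E)%E.
Proof.
elim: n g a b C => [|n IH] g a b C ab C0 g0 g_in g_out.
  by rewrite big_ord0 mulr1 /=; apply: g_in => -[].
rewrite big_ord_recl /=.
set P := \prod_(i < n) _.
have P0 : 0 <= P by apply: prodr_ge0 => i _; rewrite subr_ge0.
set I := [set` Interval (BSide true (a ord0)) (BSide false (b ord0))].
have slice t : (iter_int (fun y => g (row_mx (\row_(_ < 1) t) y))
    <= (C * P * \1_I t)%:E)%E.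
  have slice_out (y : 'rV[R]_n) :
      ~ (forall i, a (lift ord0 i) <= y 0 i <= b (lift ord0 i)) ->
      (g (row_mx (\row_(_ < 1) t) y) <= 0)%E.
    move=> y_out; apply: g_out => y_in; apply: y_out => i.
    by have := y_in (lift ord0 i); rewrite row_mx_row1_lift.
  have [tI|tI] := boolP (a ord0 <= t <= b ord0).
    rewrite indicE mem_set ?mulr1; last by rewrite /I /= in_itv /= tI.
    apply: (IH _ (fun i => a (lift ord0 i)) (fun i => b (lift ord0 i))) => // y y_in.
    apply: g_in => i; case: (unliftP ord0 i) => [j ->|->].
      by rewrite row_mx_row1_lift.
    by rewrite row_mx_row1_ord0.
  rewrite indicE memNset ?mulr0; last by rewrite /I /= in_itv /= (negbTE tI).
  rewrite -(mul0r (\prod_(i < n) (b (lift ord0 i) - a (lift ord0 i)))).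
  apply: (IH _ (fun i => a (lift ord0 i)) (fun i => b (lift ord0 i))) => // y _.
  by apply: g_out => y_in; move: tI; have := y_in ord0; rewrite row_mx_row1_ord0 => ->.
apply: le_trans (@ge0_le_integralT _ _ _ leb _ _ _ slice) _.
  by move=> t; apply: iter_int_ge0 => y; exact: g0.
rewrite (@integral_indic_itv _ _ _ (true, false)) ?mulr_ge0 //.
by rewrite lee_fin -mulrA [P * _]mulrC.
Qed.

Lemma iter_int_fin_gt0 n (g : 'rV[R]_n -> \bar R) (x0 : 'rV[R]_n) (M C c rho : R) :
  0 <= M -> 0 <= C -> 0 < c -> 0 < rho -> (forall y, 0 <= g y)%E ->
  (forall y, g y <= C%:E)%E ->
  (forall y : 'rV[R]_n, ~ (forall i, `|y 0 i| <= M) -> g y = 0%E) ->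
  (forall y : 'rV[R]_n, (forall i, `|y 0 i - x0 0 i| < rho) -> (c%:E <= g y)%E) ->
  exists2 j, 0 < j & iter_int g = j%:E.
Proof.
move=> M0 C0 c0 rho0 g0 gC g_out g_in.
have ub : (iter_int g <= (C * \prod_(i < n) (M - - M))%:E)%E.
  apply: iter_int_box_ub => //.
  - by move=> i; lra.
  - by move=> y y_out; rewrite g_out // => y_in; apply: y_out => i; rewrite -ler_norml.
have lb : ((c * \prod_(i < n) ((x0 0 i + rho) - (x0 0 i - rho)))%:E
    <= iter_int g)%E.
  apply: iter_int_box_lb => //.
  - by move=> i; lra.
  - exact: ltW.
  - by move=> y y_in; apply: g_in => i; rewrite ltr_distl y_in.
have P0 : 0 < c * \prod_(i < n) ((x0 0 i + rho) - (x0 0 i - rho)).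
  by apply: mulr_gt0 => //; apply: prodr_gt0 => i _; lra.
move: lb ub; case: (iter_int g) => [x| |] //= lb _.
by exists x => //; apply: lt_le_trans P0 _; rewrite -lee_fin.
Qed.

End iterated_integral.

Lemma indic_mul_ge0 (T : Type) (R : realType) (S : set T) (g : T -> R) y :
  (forall x, S x -> 0 <= g x) -> 0 <= \1_S y * g y.
Proof.
move=> g0; rewrite indicE; have [/set_mem Sy|] := boolP (y \in S).
  by rewrite mul1r g0.
by rewrite mul0r.
Qed.

Lemma rV_coord_le_norm (R : realType) n (x : 'rV[R]_n) i : `|x 0 i| <= `|x|.
Proof.
rewrite [X in _ <= X]mx_normrE.
exact: (@le_bigmax_cond _ _ _ 0 ((0 : 'I_1), i) xpredT (fun ij => `|x ij.1 ij.2|)).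
Qed.

Lemma rV_norm_lt (R : realType) n (x : 'rV[R]_n) e :
  0 < e -> (forall i, `|x 0 i| < e) -> `|x| < e.
Proof.
move=> e0 x_lt; rewrite [X in X < _]mx_normrE.
by apply: bigmax_lt => // -[i j] _ /=; rewrite (ord1 i).
Qed.

Lemma bounded_closure_norm_le (R : realType) (V : normedModType R) (S : set V) :
  bounded_set S -> exists2 M : R, 0 < M & forall x, closure S x -> `|x| <= M.
Proof.
move=> [M [Mreal SM]].
have M1 : M < `|M| + 1 by apply: le_lt_trans (real_ler_norm Mreal) _; rewrite ltrDl.
exists (`|M| + 1); first by have := normr_ge0 M; lra.
have S_ball : S `<=` closed_ball (0 : V) (`|M| + 1).
  move=> x Sx; rewrite closed_ballE; last by have := normr_ge0 M; lra.
  by rewrite /closed_ball_ /= sub0r normrN; exact: (SM _ M1 x Sx).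
move=> x /(closureS S_ball).
rewrite -(proj1 (closure_id _) (@closed_closure _ _)) -/(closed_ball _ _).
by rewrite closed_ballE ?ltr_wpDl // /closed_ball_ /= sub0r normrN.
Qed.

Lemma bounded_compact_closure (R : realType) n (S : set 'rV[R]_n) :
  bounded_set S -> compact (closure S).
Proof.
move=> /bounded_closure_norm_le[M M0 SM].
apply: bounded_closed_compact; last exact: closed_closure.
exists M; split; first exact: num_real.
by move=> M' MM' x Sx; apply: le_trans (SM x Sx) _; exact: ltW.
Qed.

Lemma within_closure_cvg (T U : topologicalType) (S : set T) (f : T -> U) x :
  open S -> S x -> {within closure S, continuous f} -> f @ x --> f x.
Proof.
move=> oS Sx f_cont.
have := continuous_subspaceW (@subset_closure _ S) f_cont.
by rewrite continuous_open_subspace // => /(_ x (mem_set Sx)).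
Qed.

Lemma lip_on_ge0 (R : realType) n (S : set 'rV[R]_n) (f : 'rV[R]_n -> R) :
  lip_on S f -> exists2 L, 0 < L &
    forall x y, S x -> S y -> `|f x - f y| <= L * `|x - y|.
Proof.
move=> [L fL]; exists (`|L| + 1) => [|x y Sx Sy]; first by have := normr_ge0 L; lra.
apply: le_trans (fL x y Sx Sy) _; apply: ler_wpM2r; first exact: normr_ge0.
by have := real_ler_norm (num_real L); lra.
Qed.

Lemma lip_on_ubound (R : realType) n (S : set 'rV[R]_n) (f : 'rV[R]_n -> R) x0 M :
  lip_on S f -> S x0 -> (forall x, S x -> `|x| <= M) ->
  exists C, forall y, S y -> f y <= C.
Proof.
move=> /lip_on_ge0[L L0 fL] Sx0 SM; exists (f x0 + L * (M + M)) => y Sy.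
have yx0 : `|y - x0| <= M + M by apply: le_trans (ler_normB _ _) (lerD (SM _ Sy) (SM _ Sx0)).
have := fL y x0 Sy Sx0; rewrite ler_norml => /andP[_ fyx0].
have : L * `|y - x0| <= L * (M + M) by rewrite ler_pM2l.
lra.
Qed.

Lemma lip_on_cvg (R : realType) n (S : set 'rV[R]_n) (f : 'rV[R]_n -> R) x :
  lip_on S f -> nbhs x S -> f @ x --> f x.
Proof.
move=> /lip_on_ge0[L L0 fL] Sx.
apply/(@cvgrPdist_lt _ _ _ _ (nbhs_pfilter x)) => e e0.
have [d d0 dS] := (nbhs_ballP _ _).1 Sx.
apply/nbhs_ballP; exists (Num.min d (e / L)) => [|y].
  by rewrite /= lt_min d0 divr_gt0.
rewrite -ball_normE /ball_ /= lt_min => /andP[yd ye].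
have Sy : S y by apply: dS; rewrite -ball_normE.
apply: le_lt_trans (fL x y (nbhs_singleton Sx) Sy) _.
by rewrite -ltr_pdivlMl // mulrC.
Qed.

Section weighted_power_integral.
Variables (R : realType) (N : nat) (Om : set 'rV[R]_N) (k phi : 'rV[R]_N -> R).
Variable p : R.
Hypotheses (p_ge0 : 0 <= p) (k_lip : lip_on (closure Om) k).
Hypothesis k_gt0 : forall x, closure Om x -> 0 < k x.
Hypothesis phi_cont : {within closure Om, continuous phi}.
Hypothesis phi_gt0 : forall x, Om x -> 0 < phi x.

Let powR_le a b : 0 <= a <= b -> a `^ p <= b `^ p.
Proof.
move=> /andP[a0 ab].
by apply: ge0_ler_powR; rewrite ?nnegrE //; exact: le_trans ab.
Qed.

Let weight_ge0 y : Om y -> 0 <= k y * `|phi y| `^ p.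
Proof. by move=> Oy; rewrite mulr_ge0 ?powR_ge0 // ltW // k_gt0 //; exact: subset_closure. Qed.

Lemma weighted_pow_ubound : Om !=set0 -> bounded_set Om ->
  exists2 C, 0 <= C & forall y, Om y -> k y * `|phi y| `^ p <= C.
Proof.
move=> [x0 Om_x0] bOm; have clOm_x0 := subset_closure Om_x0.
have [M _ normM] := bounded_closure_norm_le bOm.
have [kM kM_ub] := lip_on_ubound k_lip clOm_x0 normM.
have [c _ phi_ub] := EVT_max_rV (ex_intro _ x0 clOm_x0)
  (bounded_compact_closure bOm) phi_cont.
have kM0 : 0 <= kM by apply: le_trans (ltW (k_gt0 clOm_x0)) (kM_ub _ clOm_x0).
exists (kM * phi c `^ p) => [|y Oy]; first by rewrite mulr_ge0 ?powR_ge0.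
have clOm_y := subset_closure Oy.
apply: ler_pM; rewrite ?powR_ge0 //; first exact/ltW/k_gt0.
  exact: kM_ub.
by rewrite ger0_norm ?powR_le // ltW ?phi_gt0 //= phi_ub // inE.
Qed.

Lemma near_weighted_pow_lbound x0 : open Om -> Om x0 -> exists2 c, 0 < c &
  \forall y \near x0, Om y /\ c <= k y * `|phi y| `^ p.
Proof.
move=> oOm Om_x0; have nOm : nbhs x0 Om by apply: open_nbhs_nbhs.
have kx0 := k_gt0 (subset_closure Om_x0); have phix0 := phi_gt0 Om_x0.
have k_cvg : k @ x0 --> k x0.
  by apply: lip_on_cvg k_lip _; apply: filterS nOm; exact: subset_closure.
have phi_cvg := within_closure_cvg oOm Om_x0 phi_cont.
have k_half : k x0 / 2 < k x0 by lra.
have phi_half : phi x0 / 2 < phi x0 by lra.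
exists (k x0 / 2 * (phi x0 / 2) `^ p); first by rewrite mulr_gt0 ?powR_gt0 //; lra.
near=> y; split; first by near: y.
have ky : k x0 / 2 < k y by near: y; exact: cvgr_gt k_cvg _ k_half.
have phiy : phi x0 / 2 < phi y by near: y; exact: cvgr_gt phi_cvg _ phi_half.
rewrite ger0_norm; last by lra.
by rewrite ler_pM ?powR_ge0 ?powR_le //; lra.
Unshelve. all: by end_near. Qed.

Lemma dom_int_weighted_pow_gt0 : lipschitz_domain Om ->
  0 < dom_int Om (fun y => k y * `|phi y| `^ p).
Proof.
move=> [oOm _ Om_x0 bOm _]; have [x0 Ox0] := Om_x0.
have [M M0 normM] := bounded_closure_norm_le bOm.
have [C C0 le_C] := weighted_pow_ubound Om_x0 bOm.
have [c c0 /(nbhs_ballP _ _)[rho rho0 ball_rho]] := near_weighted_pow_lbound oOm Ox0.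
set g := fun y => (\1_Om y * (k y * `|phi y| `^ p))%:E.
have g_in y : Om y -> g y = (k y * `|phi y| `^ p)%:E.
  by move=> Oy; rewrite /g indicE mem_set // mul1r.
have g_out y : ~ Om y -> g y = 0%E by move=> nOy; rewrite /g indicE memNset // mul0r.
suff [j j0 gj] : exists2 j, 0 < j & iter_int g = j%:E by rewrite /dom_int -/g gj.
apply: (@iter_int_fin_gt0 _ _ g x0 M C c rho) => //.
- exact: ltW.
- by move=> y; have [Oy|/g_out->//] := pselect (Om y); rewrite g_in // lee_fin weight_ge0.
- by move=> y; have [Oy|/g_out->//] := pselect (Om y); rewrite g_in // lee_fin le_C.
- move=> y y_out; apply: g_out => Oy; apply: y_out => i.
  by apply: le_trans (rV_coord_le_norm y i) _; exact/normM/subset_closure.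
- move=> y y_in; have [Oy c_le] : Om y /\ c <= k y * `|phi y| `^ p.
    apply: ball_rho; rewrite -ball_normE /ball_ /= distrC.
    by apply: rV_norm_lt => // i; rewrite !mxE.
  by rewrite g_in // lee_fin.
Qed.

End weighted_power_integral.

(* Unlike [deriveZ], no derivability hypothesis: if [f] is not derivable then
   neither is [c * f], and both sides are the junk value [0]. *)
Lemma deriveZ_neq0 (R : realType) (V : normedModType R) (f : V -> R) (c : R) x v :
  c != 0 -> 'D_v (fun y => c * f y) x = c * 'D_v f x.
Proof.
move=> c0; have [df|ndf] := pselect (derivable f x v); first exact: deriveZ.
have ndcf : ~ derivable (fun y => c * f y) x v.
  move=> /(derivableZ (k := c^-1)) dcf; apply: ndf.
  suff <- : c^-1 \*: (fun y => c * f y) = f by [].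
  by apply/funext => y /=; rewrite /GRing.scale /= mulrA mulVf // mul1r.
rewrite /derive /lim /lim_in [LHS]getPN; last first.
  by move=> l l_lim; apply: ndcf; apply/cvg_ex; exists l.
rewrite [X in _ * X]getPN ?mulr0 //.
by move=> l l_lim; apply: ndf; apply/cvg_ex; exists l.
Qed.

Section scaling.
Variables (R : realType) (N : nat) (Om : set 'rV[R]_N) (A : 'rV[R]_N -> 'M[R]_N).
Variables (c : R) (u : 'rV[R]_N -> R).
Hypothesis c_neq0 : c != 0.

Lemma fluxZ i : flux A (fun y => c * u y) i = (fun y => c * flux A u i y).
Proof.
apply/funext => y; rewrite /flux mulr_sumr; apply: eq_bigr => j _.
by rewrite /partial deriveZ_neq0 // mulrCA.
Qed.

Lemma divAZ : divA A (fun y => c * u y) = (fun x => c * divA A u x).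
Proof.
apply/funext => x; rewrite /divA mulr_sumr; apply: eq_bigr => i _.
by rewrite fluxZ /partial deriveZ_neq0.
Qed.

Lemma classical_regZ : classical_reg Om A u -> classical_reg Om A (fun y => c * u y).
Proof.
move=> [u_cont u_diff]; split=> [x|x Ox].
  by apply: cvgM; [exact: cvg_cst | exact: u_cont].
have [du dflux] := u_diff x Ox; split=> [|i]; first exact: differentiableZ.
by rewrite fluxZ; exact: differentiableZ.
Qed.

End scaling.

Lemma neumannZ (R : realType) N (Om : set 'rV[R]_N) (c : R) (u : 'rV[R]_N -> R) :
  neumann Om u -> neumann Om (fun y => c * u y).
Proof.
move=> u_neu x nu nu_normal.
have -> : (fun h : R => (c * u x - c * u (x - h *: nu)) / h) =
    (fun h : R => c * ((u x - u (x - h *: nu)) / h)).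
  by apply/funext => h; rewrite -mulrBr mulrA.
rewrite -[X in _ --> X](mulr0 c).
by apply: cvgM; [exact: cvg_cst | exact: u_neu].
Qed.

(* No finiteness assumption is needed: [c * +oo = +oo], [c * -oo = -oo], and
   [fine] sends both to [0]. *)
Lemma dom_intZ (R : realType) N (Om : set 'rV[R]_N) (g : 'rV[R]_N -> R) (c : R) :
  0 < c -> (forall y, Om y -> 0 <= g y) ->
  dom_int Om (fun y => c * g y) = c * dom_int Om g.
Proof.
move=> c0 g0; rewrite /dom_int.
under eq_fun do rewrite mulrCA EFinM.
rewrite iter_intZ //; last by move=> y; rewrite lee_fin indic_mul_ge0.
case: (iter_int _) => [x| |] //=.
  by rewrite gt0_muley ?lte_fin ?mulr0.
by rewrite gt0_muleNy ?lte_fin ?mulr0.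
Qed.

Lemma scaled_eigenfunction_stationary (R : realType) N (Om : set 'rV[R]_N)
    (A : 'rV[R]_N -> 'M[R]_N) (r k : 'rV[R]_N -> R) (p lam mu : R)
    (phi : 'rV[R]_N -> R) :
  neumann_eigenpair Om A r lam phi -> (forall x, Om x -> 0 < phi x) -> 0 < mu ->
  dom_int Om (fun y => k y * `|mu * phi y| `^ p) = - lam ->
  positive_stationary_solution Om A r k p (fun x => mu * phi x).
Proof.
move=> [phi_reg _ phi_eq phi_neu] phi_gt0 mu0 J_eq; have mu_neq0 := lt0r_neq0 mu0.
split=> [t _|x Ox]; last by rewrite mulr_gt0 ?phi_gt0.
split; [exact: classical_regZ mu_neq0 phi_reg | move=> x Ox | exact: neumannZ].
split; first exact: derivable_cst.
rewrite derive_cst J_eq divAZ //.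
have -> : divA A phi x = - lam * phi x - r x * phi x by rewrite -(phi_eq x Ox) addrK.
by ring.
Qed.

Theorem lemma3p1 (R : realType) (N : nat) (Om : set 'rV[R]_N)
  (A : 'rV[R]_N -> 'M[R]_N) (r k : 'rV[R]_N -> R) (p : R)
  (lam1 : R) (phi1 : 'rV[R]_N -> R) :
  lipschitz_domain Om ->
  smooth_on_closure Om A -> uniformly_elliptic Om A ->
  lip_on (closure Om) r -> (forall x, closure Om x -> 0 < r x) ->
  lip_on (closure Om) k -> (forall x, closure Om x -> 0 < k x) ->
  1 <= p ->
  first_neumann_eigenvalue Om A r lam1 ->
  neumann_eigenpair Om A r lam1 phi1 ->
  (forall x, Om x -> 0 < phi1 x) ->
  lam1 < 0 ->
  exists2 mu : R, 0 < mu &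
    positive_stationary_solution Om A r k p (fun x => mu * phi1 x).
Proof.
move=> Om_dom _ _ _ _ k_lip k_gt0 p1 _ eig phi_gt0 lam_lt0.
have [[phi_cont _] _ _ _] := eig.
have p0 : 0 < p by lra.
set J := dom_int Om (fun y => k y * `|phi1 y| `^ p).
have J0 : 0 < J by apply: dom_int_weighted_pow_gt0 => //; exact: ltW.
pose mu := (- lam1 / J) `^ p^-1.
have mu0 : 0 < mu by rewrite powR_gt0 // divr_gt0 // oppr_gt0.
have mu_p : mu `^ p = - lam1 / J.
  by rewrite -powRrM mulVf ?gt_eqF // powRr1 // ltW // divr_gt0 // oppr_gt0.
exists mu => //.
apply: (scaled_eigenfunction_stationary eig phi_gt0 mu0).
have -> : (fun y => k y * `|mu * phi1 y| `^ p)
    = (fun y => mu `^ p * (k y * `|phi1 y| `^ p)).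
  by apply/funext => y; rewrite normrM (gtr0_norm mu0) powRM ?normr_ge0 ?ltW // mulrCA.
rewrite dom_intZ; first by rewrite -/J mu_p divfK ?gt_eqF.
  exact: powR_gt0.
by move=> y Oy; rewrite mulr_ge0 ?powR_ge0 // ltW // k_gt0 //; exact: subset_closure.
Qed.
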